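(* Every linearly closed proper subset of the abstract linear space $LS^3$ is empty, a single point, or an abstract line of $LS^3$.
   Context: $\mathbb{S}^3$ is the unit sphere of $\mathbb{C}^2$. The abstract linear space $LS^3$ has point set $\mathbb{S}^3$ and abstract lines the sets $L\cap\mathbb{S}^3$ where $L$ is a complex affine line of $\mathbb{C}^2$ meeting $\mathbb{S}^3$ in more than one point (i.e. non-tangential; such $L\cap\mathbb{S}^3$ is a round circle); any two distinct points of $\mathbb{S}^3$ lie on exactly one abstract line. A subset $A\subset\mathbb{S}^3$ is linearly closed if for any two distinct $x,y\in A$ the abstract line through $x$ and $y$ is contained in $A$. Proper means $A\neq\mathbb{S}^3$. *)

From HB Require Import structures.
From mathcomp Require Import all_boot all_order all_algebra.
From mathcomp Require Import complex.
From mathcomp Require Import Rstruct.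
From Stdlib Require Import Reals.
Set Implicit Arguments. Unset Strict Implicit. Unset Printing Implicit Defensive.
Import Order.TTheory GRing.Theory Num.Theory.
Local Open Scope ring_scope.

Definition CC := complex Rdefinitions.R.

Definition C2 := (CC * CC)%type.

Definition S3 (p : C2) : Prop :=
  p.1 * (p.1)^* + p.2 * (p.2)^* = 1.

Definition cline (a v : C2) (q : C2) : Prop :=
  exists t : CC, q = (a.1 + t * v.1, a.2 + t * v.2).

Definition abstract_line (B : C2 -> Prop) : Prop :=
  exists a v : C2, v <> (0, 0) /\
    (exists x y : C2, x <> y /\ cline a v x /\ S3 x /\ cline a v y /\ S3 y) /\
    (forall q, B q <-> (cline a v q /\ S3 q)).

(* A ⊆ S^3 is linearly closed: for distinct x, y in A, the abstract line
   through x and y (the unique abstract line containing both) lies in A *)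
Definition linearly_closed (A : C2 -> Prop) : Prop :=
  (forall q, A q -> S3 q) /\
  forall x y : C2, A x -> A y -> x <> y ->
    forall B : C2 -> Prop, abstract_line B -> B x -> B y ->
      forall q, B q -> A q.

(* In the chart of S^3 minus e1 = (1, 0) given by the Cayley transform
   (m, u) |-> (1 - 1/u, m/u) of the Siegel boundary u + u^* = 1 + |m|^2, the
   abstract lines through e1 are the vertical lines m = const, and every other
   abstract line is the graph of u = a + w m over a circle |m - w^*| = r.
   So a linearly closed set containing e1 and two points whose line misses e1
   contains all vertical lines over that circle; every other point lies on a
   line whose circle passes through its m-coordinate and meets the first circle
   twice, hence is in the set as well.  The unitary group acts transitively on
   S^3 and preserves abstract lines, so e1 may be any point of the set: a
   proper linearly closed set containing two points lies on their line. *)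

From HB Require Import structures.
From mathcomp Require Import all_boot all_order all_algebra complex Rstruct.
From mathcomp Require Import ring.
From Stdlib Require Import Classical.
Set Implicit Arguments. Unset Strict Implicit. Unset Printing Implicit Defensive.
Import Order.TTheory GRing.Theory Num.Theory.
Local Open Scope ring_scope.

Ltac push_conj :=
  do 3 rewrite ?(rmorphB, rmorphD, rmorphM, rmorphN, rmorph1, rmorph0, fmorphV, rmorph_nat) /=
             ?(conjCK, conjCi).

Section PlaneCircles.
Variable C : numClosedFieldType.
Implicit Types k m : C.

Definition sqdist (x y : C) : C := (x - y) * (x - y)^*.

Lemma circle_through_center k m : m != k ->
  exists m1 m2 g, [/\ m1 != m2,
    sqdist m1 k = sqdist m k, sqdist m2 k = sqdist m k,
    sqdist m1 g = sqdist k g & sqdist m2 g = sqdist k g].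
Proof.
move=> mk.
have [c -> c0] : exists2 c, m = c + k & c != 0 by exists (m - k); rewrite ?subrK ?subr_eq0.
have ii : 'i * 'i = -1 :> C by rewrite -expr2 sqrCi.
exists (k + c), (k + 'i * c), (k + (1 + 'i) * c / 2); split.
- rewrite (can_eq (addKr k)) -[X in X == _]mul1r (inj_eq (mulIf c0)) eq_sym.
  by apply: contraNneq (nonRealCi C) => ->; apply: real1.
- by rewrite /sqdist; push_conj; ring.
- by rewrite /sqdist; push_conj; ring: ii.
- by rewrite /sqdist; push_conj; field.
- by rewrite /sqdist; push_conj; field.
Qed.

(* The two points are k +- i s d on the perpendicular to [k, mq] through k,
   the centre lies on the line through k and mq. *)
Lemma circle_through_point k m mq : m != k -> mq != k ->
  exists m1 m2 g, [/\ m1 != m2,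
    sqdist m1 k = sqdist m k, sqdist m2 k = sqdist m k,
    sqdist m1 g = sqdist mq g & sqdist m2 g = sqdist mq g].
Proof.
move=> mk mqk.
have [c -> c0] : exists2 c, m = c + k & c != 0 by exists (m - k); rewrite ?subrK ?subr_eq0.
have [d -> d0] : exists2 d, mq = d + k & d != 0 by exists (mq - k); rewrite ?subrK ?subr_eq0.
have ii : 'i * 'i = -1 :> C by rewrite -expr2 sqrCi.
have [s [sR s0 ssd]] : exists s, [/\ s^* = s, s != 0 & s * s * (d * d^*) = c * c^*].
  exists (`|c| / `|d|); split.
  - by apply/conj_Creal; rewrite realM ?realV ?normr_real.
  - by rewrite mulf_eq0 invr_eq0 !normr_eq0 negb_or c0.
  - by rewrite -!normCK; field; rewrite normr_eq0.
exists (k + 'i * s * d), (k - 'i * s * d), (k + (1 - s * s) / 2 * d); split.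
- rewrite (can_eq (addKr k)) -subr_eq0 opprK -mulr2n mulrn_eq0 /=.
  by rewrite !mulf_eq0 (negbTE s0) (negbTE d0) (negbTE (neq0Ci C)).
- by rewrite /sqdist; push_conj; rewrite sR; ring: ii ssd.
- by rewrite /sqdist; push_conj; rewrite sR; ring: ii ssd.
- by rewrite /sqdist; push_conj; rewrite sR; field: ii.
- by rewrite /sqdist; push_conj; rewrite sR; field: ii.
Qed.

Lemma circle_meets_circle_through k m mq : m != k ->
  exists m1 m2 g, [/\ m1 != m2,
    sqdist m1 k = sqdist m k, sqdist m2 k = sqdist m k,
    sqdist m1 g = sqdist mq g & sqdist m2 g = sqdist mq g].
Proof.
move=> mk; have [->|mqk] := eqVneq mq k; first exact: circle_through_center.
exact: circle_through_point.
Qed.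

End PlaneCircles.

(* Lets [ring]/[field] use a hypothesis [a = b] (which [ring: h] does not
   accept in the presence of sums over [CC]). *)
Lemma eq_of_subr_multiple (R : pzRingType) (x y a b c : R) :
  x - y = c * (a - b) -> a = b -> x = y.
Proof. by move=> E ab; apply/eqP; rewrite -subr_eq0 E ab subrr mulr0. Qed.

Implicit Types (m u a w : CC) (x y z p q : C2).

Definition line_through (x y : C2) : C2 -> Prop := cline x (y.1 - x.1, y.2 - x.2).

Lemma line_through_left x y : line_through x y x.
Proof. by exists 0; case: x => ? ? /=; congr (_, _); ring. Qed.

Lemma line_through_right x y : line_through x y y.
Proof. by exists 1; case: x y => ? ? [? ?] /=; congr (_, _); ring. Qed.

Definition line_closed (P : C2 -> Prop) :=
  forall x y q, P x -> P y -> x <> y -> S3 q -> line_through x y q -> P q.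

Lemma abstract_line_through (B : C2 -> Prop) x y : x <> y -> S3 x -> S3 y ->
  (forall q, B q <-> line_through x y q /\ S3 q) -> abstract_line B.
Proof.
move=> xy Sx Sy BE; exists x, (y.1 - x.1, y.2 - x.2); split; last split=> //.
- case=> /eqP; rewrite subr_eq0 => /eqP y1 /eqP; rewrite subr_eq0 => /eqP y2.
  by apply: xy; case: x y y1 y2 {Sx Sy BE} => ? ? [? ?] /= -> ->.
- by exists x, y; do !split=> //; [exact: line_through_left | exact: line_through_right].
Qed.

Lemma linearly_closed_line_closed A : linearly_closed A -> line_closed A.
Proof.
move=> [AS Acl] x y q Ax Ay xy Sq xyq.
have := abstract_line_through (B := fun q => line_through x y q /\ S3 q) xy (AS x Ax) (AS y Ay).
move/(_ (fun q => iff_refl _))/(Acl x y Ax Ay xy); apply=> //.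
- by split; [exact: line_through_left | exact: AS].
- by split; [exact: line_through_right | exact: AS].
Qed.

Definition e1 : C2 := (1, 0).

Definition siegel (m u : CC) := u + u^* = 1 + m * m^*.

Definition cayley (m u : CC) : C2 := (1 - u^-1, m / u).

Lemma siegel_neq0 m u : siegel m u -> u != 0.
Proof.
move=> mu; apply: contraTneq (ltr_wpDr (mul_conjC_ge0 m) (@ltr01 CC)) => u0.
by rewrite -mu u0 rmorph0 addr0 ltxx.
Qed.

Lemma cayley_S3 m u : siegel m u -> S3 (cayley m u).
Proof.
move=> mu; have u0 := siegel_neq0 mu.
rewrite /S3 /=; push_conj; apply: (eq_of_subr_multiple (c := - (u * u^*)^-1) _ mu).
by field; rewrite conjC_eq0 u0.
Qed.

Lemma cayley_neq_e1 m u : u != 0 -> cayley m u <> e1.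
Proof.
move=> + [E _].
by rewrite -invr_eq0 -oppr_eq0 -(addKr 1 (- u^-1)) E addNr eqxx.
Qed.

Lemma cayley_inj m1 u1 m2 u2 : u1 != 0 -> u2 != 0 ->
  cayley m1 u1 = cayley m2 u2 -> m1 = m2 /\ u1 = u2.
Proof.
move=> u10 u20 [E1 E2].
have u12 : u1 = u2 by apply: invr_inj; apply: oppr_inj; apply: (addrI 1).
by move: E2; rewrite u12 => /(mulIf _) -> //; rewrite invr_eq0.
Qed.

Lemma S3_cayley q : S3 q -> q = e1 \/ exists m u, siegel m u /\ q = cayley m u.
Proof.
case: q => q1 q2; rewrite /S3 /= => S.
have [q11|q1n1] := eqVneq q1 1.
  left; move: S; rewrite q11 rmorph1 mulr1 -[RHS]addr0 => /addrI /eqP.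
  by rewrite mul_conjC_eq0 => /eqP ->.
right; have d0 : 1 - q1 != 0 by rewrite subr_eq0 eq_sym.
have d0' : 1 - q1^* != 0 by rewrite -conjC_eq0; push_conj.
exists (q2 / (1 - q1)), (1 - q1)^-1; split.
  rewrite /siegel; push_conj.
  apply: (eq_of_subr_multiple (c := - ((1 - q1) * (1 - q1^*))^-1) _ S).
  by field; rewrite d0 d0'.
by rewrite /cayley invrK; congr (_, _); field.
Qed.

Lemma line_through_cayley_affine a w m1 m2 m3 :
  a + w * m1 != 0 -> a + w * m2 != 0 -> a + w * m3 != 0 -> m1 != m2 ->
  line_through (cayley m1 (a + w * m1)) (cayley m2 (a + w * m2)) (cayley m3 (a + w * m3)).
Proof.
move=> h1 h2 h3 m12; have m21 : m2 - m1 != 0 by rewrite subr_eq0 eq_sym.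
exists ((a + w * m2) * (m3 - m1) / ((a + w * m3) * (m2 - m1))).
by rewrite /cayley /=; congr (_, _); field; rewrite h1 h2 h3 m21.
Qed.

Lemma line_through_e1_cayley m u u' : u != 0 -> u' != 0 ->
  line_through e1 (cayley m u) (cayley m u').
Proof.
move=> u0 u0'; exists (u / u').
by rewrite /cayley /=; congr (_, _); field; rewrite u0 u0'.
Qed.

Lemma line_through_cayley_e1 m u u' : u != 0 -> u' != 0 -> u != u' ->
  line_through (cayley m u) (cayley m u') e1.
Proof.
move=> u0 u0' uu'; have d0 : u' - u != 0 by rewrite subr_eq0 eq_sym.
exists (u' / (u' - u)).
by rewrite /cayley /=; congr (_, _); field; rewrite u0 u0' d0.
Qed.

Lemma siegel_affineE a w m :
  siegel m (a + w * m) <-> sqdist m w^* = a + a^* + w * w^* - 1.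
Proof.
rewrite /siegel /sqdist; push_conj; split=> h.
- by apply: (eq_of_subr_multiple (c := -1) _ h); ring.
- by apply: (eq_of_subr_multiple (c := -1) _ h); ring.
Qed.

Lemma siegel_affine_circle a w m0 m : siegel m0 (a + w * m0) ->
  siegel m (a + w * m) <-> sqdist m w^* = sqdist m0 w^*.
Proof. by move=> /siegel_affineE h0; rewrite siegel_affineE h0. Qed.

Section LineClosedThroughE1.
Variable P : C2 -> Prop.
Hypothesis Pcl : line_closed P.
Hypothesis Pe1 : P e1.

Lemma line_closed_vertical m u u' :
  siegel m u -> siegel m u' -> P (cayley m u) -> P (cayley m u').
Proof.
move=> mu mu' Pu; have u0 := siegel_neq0 mu.
apply: (Pcl Pe1 Pu _ (cayley_S3 mu') (line_through_e1_cayley m u0 (siegel_neq0 mu'))).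
by move/esym; apply: cayley_neq_e1.
Qed.

Lemma line_closed_cylinder a w (mx my : CC) : mx != my ->
  siegel mx (a + w * mx) -> siegel my (a + w * my) ->
  P (cayley mx (a + w * mx)) -> P (cayley my (a + w * my)) ->
  forall m u, siegel m (a + w * m) -> siegel m u -> P (cayley m u).
Proof.
move=> mxy hx hy Px Py m u hm mu; apply: (line_closed_vertical hm mu).
have ux0 := siegel_neq0 hx; have uy0 := siegel_neq0 hy.
apply: (Pcl Px Py _ (cayley_S3 hm)).
  by case/(cayley_inj ux0 uy0) => /eqP; rewrite (negbTE mxy).
exact: line_through_cayley_affine ux0 uy0 (siegel_neq0 hm) mxy.
Qed.

Lemma line_closed_chart_full (mx ux my uy : CC) : mx != my ->
  siegel mx ux -> siegel my uy -> P (cayley mx ux) -> P (cayley my uy) ->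
  forall q, S3 q -> P q.
Proof.
move=> mxy hx hy Px Py q Sq.
(* the abstract line through the two points is the graph of u = a + w m *)
have [a [w [Ex Ey]]] : exists a w, ux = a + w * mx /\ uy = a + w * my.
  have d0 : my - mx != 0 by rewrite subr_eq0 eq_sym.
  exists (ux - (uy - ux) / (my - mx) * mx), ((uy - ux) / (my - mx)).
  by split; [rewrite subrK | field].
rewrite {}Ex in hx Px; rewrite {}Ey in hy Py.
have cyl := line_closed_cylinder mxy hx hy Px Py.
have [->|[mq [uq [hq ->]]]] := S3_cayley Sq; first exact: Pe1.
have r0 : mx != w^*. (* the circle through mx and my is not a single point *)
  apply: contraNneq mxy => xw; rewrite xw eq_sym -subr_eq0 -mul_conjC_eq0.
  rewrite -/(sqdist my w^*) ((siegel_affine_circle _ hx).1 hy).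
  by rewrite /sqdist xw subrr mul0r.
have [m1 [m2 [g [m12 c1 c2 g1 g2]]]] := circle_meets_circle_through mq r0.
have [a' [w' [Eq gw]]] : exists a' w', uq = a' + w' * mq /\ w'^* = g.
  by exists (uq - g^* * mq), g^*; rewrite subrK conjCK.
rewrite {}Eq in hq *; rewrite -{}gw in g1 g2.
have P_on_circle m : sqdist m w^* = sqdist mx w^* -> siegel m (a' + w' * m) ->
    P (cayley m (a' + w' * m)).
  by move/(siegel_affine_circle _ hx); apply: cyl.
have h1 := (siegel_affine_circle _ hq).2 g1; have h2 := (siegel_affine_circle _ hq).2 g2.
have u10 := siegel_neq0 h1; have u20 := siegel_neq0 h2.
apply: (Pcl (P_on_circle _ c1 h1) (P_on_circle _ c2 h2) _ (cayley_S3 hq)).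
  by case/(cayley_inj u10 u20) => /eqP; rewrite (negbTE m12).
exact: line_through_cayley_affine u10 u20 (siegel_neq0 hq) m12.
Qed.

End LineClosedThroughE1.

Lemma line_closed_e1_full P x y : line_closed P -> P e1 ->
  S3 x -> S3 y -> P x -> P y -> x <> y -> ~ line_through x y e1 ->
  forall q, S3 q -> P q.
Proof.
move=> Pcl Pe1 Sx Sy Px Py xy xye1 q Sq.
have [xe|[mx [ux [hx xE]]]] := S3_cayley Sx.
  by case: xye1; rewrite -xe; apply: line_through_left.
have [ye|[my [uy [hy yE]]]] := S3_cayley Sy.
  by case: xye1; rewrite -ye; apply: line_through_right.
subst x y; have [mxy|mxy] := eqVneq mx my; last first.
  exact: (line_closed_chart_full Pcl Pe1 mxy hx hy Px Py Sq).
case: xye1; rewrite -mxy; apply: line_through_cayley_e1 (siegel_neq0 hx) (siegel_neq0 hy) _.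
by apply: contra_not_neq xy => ->; rewrite mxy.
Qed.

(* The matrix [[z1, -z2^*], [z2, z1^*]], unitary when z lies on S^3. *)
Definition unitary (z p : C2) : C2 :=
  (p.1 * z.1 - p.2 * z.2^*, p.1 * z.2 + p.2 * z.1^*).

Definition unitary_inv (z p : C2) : C2 :=
  (p.1 * z.1^* + p.2 * z.2^*, - p.1 * z.2 + p.2 * z.1).

Lemma unitary_invK z : S3 z -> cancel (unitary_inv z) (unitary z).
Proof.
case: z => z1 z2; rewrite /S3 /= => S [p1 p2]; rewrite /unitary /unitary_inv /=; push_conj.
congr (_, _).
  by apply: (eq_of_subr_multiple (c := p1) _ S); ring.
by apply: (eq_of_subr_multiple (c := p2) _ S); ring.
Qed.

Lemma unitaryK z : S3 z -> cancel (unitary z) (unitary_inv z).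
Proof.
case: z => z1 z2; rewrite /S3 /= => S [p1 p2]; rewrite /unitary /unitary_inv /=; push_conj.
congr (_, _).
  by apply: (eq_of_subr_multiple (c := p1) _ S); ring.
by apply: (eq_of_subr_multiple (c := p2) _ S); ring.
Qed.

Lemma S3_unitary z p : S3 z -> S3 (unitary z p) <-> S3 p.
Proof.
case: z p => z1 z2 [p1 p2]; rewrite /S3 /unitary /= => S.
have -> : (p1 * z1 - p2 * z2^*) * (p1 * z1 - p2 * z2^*)^* +
          (p1 * z2 + p2 * z1^*) * (p1 * z2 + p2 * z1^*)^* =
          (p1 * p1^* + p2 * p2^*) * (z1 * z1^* + z2 * z2^*).
  by push_conj; ring.
by rewrite S mulr1.
Qed.

Lemma line_through_unitary z x y q :
  line_through x y q -> line_through (unitary z x) (unitary z y) (unitary z q).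
Proof. by case=> t ->; exists t; rewrite /unitary /=; push_conj; congr (_, _); ring. Qed.

Lemma unitary_e1 z : unitary z e1 = z.
Proof. by case: z => z1 z2; rewrite /unitary /e1 /=; congr (_, _); ring. Qed.

Lemma line_closed_unitary P z :
  S3 z -> line_closed P -> line_closed (fun p => P (unitary z p)).
Proof.
move=> Sz Pcl x y q Px Py xy Sq xyq.
apply: (Pcl _ _ _ Px Py _ _ (line_through_unitary z xyq)); last exact/S3_unitary.
by move/(can_inj (unitaryK Sz)).
Qed.

Lemma line_closed_full P z x y : line_closed P -> (forall q, P q -> S3 q) ->
  P z -> P x -> P y -> x <> y -> ~ line_through x y z -> forall q, S3 q -> P q.
Proof.
move=> Pcl PS Pz Px Py xy xyz q Sq; have Sz := PS z Pz.
have S3_inv p : S3 p -> S3 (unitary_inv z p).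
  by move=> Sp; apply/(S3_unitary _ Sz); rewrite unitary_invK.
rewrite -(unitary_invK Sz q).
apply: (line_closed_e1_full (line_closed_unitary Sz Pcl) _
          (S3_inv x (PS x Px)) (S3_inv y (PS y Py))) => /=.
- by rewrite unitary_e1.
- by rewrite unitary_invK.
- by rewrite unitary_invK.
- by move/(can_inj (unitary_invK Sz)).
- by move/(line_through_unitary z); rewrite !unitary_invK // unitary_e1.
- exact: S3_inv.
Qed.

Theorem proposition3p3 (A : C2 -> Prop) :
  linearly_closed A ->
  ~ (forall q, A q <-> S3 q) ->
  (forall q, ~ A q) \/
  (exists x, S3 x /\ forall q, A q <-> q = x) \/
  abstract_line A.
Proof.
move=> Alc Anot; have Acl := linearly_closed_line_closed Alc; have AS := Alc.1.
have [[x Ax]|A0] := classic (exists x, A x); last by left=> q Aq; apply: A0; exists q.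
have [[y [Ay yx]]|A1] := classic (exists y, A y /\ y <> x); last first.
  right; left; exists x; split; first exact: AS.
  by move=> q; split=> [Aq|->//]; apply: NNPP => qx; apply: A1; exists q.
have xy : x <> y by apply: nesym.
have [[z [Az xyz]]|A2] := classic (exists z, A z /\ ~ line_through x y z).
  case: Anot => q; split=> [/AS //|Sq].
  exact: (line_closed_full Acl AS Az Ax Ay xy xyz Sq).
right; right; apply: (abstract_line_through xy (AS x Ax) (AS y Ay)) => q.
split=> [Aq|[xyq Sq]]; last exact: Acl Ax Ay xy Sq xyq.
by split; [apply: NNPP => xyq; apply: A2; exists q | exact: AS].
Qed.
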